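(* Let $(S^{(n)})$ be a sequence of $n\times n$ matrices with non-negative entries satisfying Assumption 2. Then for every $\varepsilon\in(0,1]$, \[ \sup_n\operatorname{perm}\left(I_n+(1-\varepsilon)S^{(n)}\right)<\infty, \] where $\operatorname{perm}$ denotes the permanent.
   Context: Assumption 2: for each $\varepsilon\in(0,1]$, $\liminf_n\min_{\gamma\in[0,1-\varepsilon]}\det(I_n-\gamma S^{(n)})>0$. *)

From HB Require Import structures.
From mathcomp Require Import all_boot all_order all_algebra all_fingroup.
From mathcomp Require Import reals.
Set Implicit Arguments. Unset Strict Implicit. Unset Printing Implicit Defensive.
Import Order.TTheory GRing.Theory Num.Theory.
Local Open Scope ring_scope.

Definition permanent (R : comNzRingType) (n : nat) (A : 'M[R]_n) : R :=
  \sum_(s : 'S_n) \prod_(i < n) A i (s i).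

(* Assumption 2: for each eps in (0,1],
   liminf_n min_{gamma in [0,1-eps]} det(I_n - gamma S^(n)) > 0,
   unfolded as: there are c > 0 and N such that for all n >= N and all
   gamma in [0, 1-eps], det(I_n - gamma S^(n)) >= c. *)
Definition assumption2 (R : realType) (S : forall n : nat, 'M[R]_n) : Prop :=
  forall eps : R, 0 < eps -> eps <= 1 ->
    exists2 c : R, 0 < c &
      exists N : nat, forall n : nat, (N <= n)%N ->
        forall gamma : R, 0 <= gamma -> gamma <= 1 - eps ->
          c <= \det (1%:M - gamma *: S n).

From HB Require Import structures.
From mathcomp Require Import all_boot all_order all_algebra all_fingroup.
From mathcomp Require Import reals ring.
From mathcomp Require Import boolp classical_sets topology normedtype derive.
Import Order.TTheory GRing.Theory Num.Theory numFieldNormedType.Exports.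
Set Implicit Arguments. Unset Strict Implicit. Unset Printing Implicit Defensive.
Local Open Scope ring_scope.

(* Write [A_D] for [A] with the rows indexed by [D] replaced by zero.  If
   [A >= 0] and [det (1 - g A) > 0] for [g] in [[0, 1]], then every [1 - A_D]
   is a nonsingular M-matrix: its determinant stays positive on the whole
   segment, and its inverse [Y_D] is nonnegative and decreases as [D] grows;
   this follows by downward induction on [D] together with a continuity
   argument in [g].  Expanding [perm (1 + A_D)] along a row [m] outside [D],
   and bounding the minors by induction against [Y_D = 1 + A_D Y_D], gives
   [perm (1 + A_D) <= (Y_D)_mm perm (1 + A_{m+D})], while Cramer's rule gives
   [(Y_D)_mm det (1 - A_D) = det (1 - A_{m+D})].  Hence
   [perm (1 + A_D) det (1 - A_D)] can only grow with [D]; it is [1] for the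
   full set, so [perm (1 + A) <= 1 / det (1 - A)].  For [A = (1 - eps) S^(n)],
   Assumption 2 bounds this by [1 / c] for all large [n]. *)

Lemma setU1_ind (T : finType) (P : {set T} -> Prop) :
  (forall D : {set T}, (forall x, x \notin D -> P (x |: D)) -> P D) -> forall D, P D.
Proof.
move=> IH D; have [k] := ubnP #|~: D|; elim: k D => // k IHk D ltDk.
apply: IH => x xD; apply: IHk; rewrite -ltnS (leq_trans _ ltDk) // ltnS.
rewrite finset.setCU; apply: proper_card; rewrite finset.properEneq finset.subsetIr andbT.
by apply/negP => /eqP/setP/(_ x); rewrite !inE eqxx xD.
Qed.

Section RowChangeDet.
Variables (R : comNzRingType) (n : nat) (m : 'I_n) (X Y : 'M[R]_n).
Hypothesis eqXY : forall i k, i != m -> X i k = Y i k.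

Lemma cofactor_row_change j : cofactor X m j = cofactor Y m j.
Proof.
rewrite /cofactor; congr (_ * \det _).
by apply/matrixP => i k; rewrite !mxE eqXY // eq_sym neq_lift.
Qed.

Lemma det_row_change : \det X = \det Y + \sum_k (X m k - Y m k) * \adj Y k m.
Proof.
rewrite (expand_det_row X m) (expand_det_row Y m) -big_split /=.
by apply: eq_bigr => k _; rewrite mxE cofactor_row_change; ring.
Qed.

End RowChangeDet.

Section RowChangeInv.
Variables (R : comUnitRingType) (n : nat) (m : 'I_n) (X Y : 'M[R]_n).
Hypothesis eqXY : forall i k, i != m -> X i k = Y i k.

Lemma invmx_row_change : X \in unitmx -> Y \in unitmx -> forall i j,
  invmx X i j = invmx Y i j + invmx X i m * \sum_l (Y m l - X m l) * invmx Y l j.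
Proof.
move=> uX uY i j.
have resolvent : invmx X - invmx Y = invmx X *m (Y - X) *m invmx Y.
  by rewrite mulmxBr mulmxBl -!mulmxA mulmxV // mulmx1 mulmxA mulVmx // mul1mx.
have -> : invmx X i j = invmx Y i j + (invmx X - invmx Y) i j.
  by rewrite !mxE addrCA subrr addr0.
congr (_ + _); rewrite resolvent mxE big_distrr /=.
apply: eq_bigr => l _; rewrite mulrA; congr (_ * _).
rewrite mxE (bigD1 m) //= big1 ?addr0 => [|k km]; first by rewrite !mxE.
by rewrite !mxE eqXY // subrr mulr0.
Qed.

End RowChangeInv.

Lemma adj_invmx (R : comUnitRingType) n (X : 'M[R]_n) :
  X \in unitmx -> \adj X = \det X *: invmx X.
Proof. by move=> uX; rewrite /invmx uX scalerA mulrV ?scale1r // -unitmxE. Qed.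

Lemma det_delta_row (R : comNzRingType) n (X : 'M[R]_n) (m : 'I_n) :
  (forall k, X m k = (m == k)%:R) -> \det X = cofactor X m m.
Proof.
move=> Xm; rewrite (expand_det_row _ m) (bigD1 m) //= big1 ?addr0.
  by rewrite Xm eqxx mul1r.
by move=> k km; rewrite Xm eq_sym (negPf km) mul0r.
Qed.

Section PermanentRows.
Variables (R : comNzRingType) (n : nat).
Implicit Types X : 'M[R]_n.

Definition row_delta X (m j : 'I_n) : 'M[R]_n :=
  \matrix_(i, k) if i == m then (j == k)%:R else X i k.

Lemma row_delta_row X (m j k : 'I_n) : row_delta X m j m k = (j == k)%:R.
Proof. by rewrite mxE eqxx. Qed.

Lemma row_delta_neq X (m j i k : 'I_n) : i != m -> row_delta X m j i k = X i k.
Proof. by move=> im; rewrite mxE (negPf im). Qed.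

Lemma expand_permanent_row X (m : 'I_n) :
  permanent X = \sum_j X m j * permanent (row_delta X m j).
Proof.
rewrite /permanent.
under [RHS]eq_bigr do rewrite mulr_sumr.
rewrite exchange_big /=; apply: eq_bigr => s _.
have off_m j :
    \prod_i row_delta X m j i (s i) = (j == s m)%:R * \prod_(i | i != m) X i (s i).
  rewrite (bigD1 m) //= row_delta_row; congr (_ * _).
  by apply: eq_bigr => i im; rewrite row_delta_neq.
rewrite (bigD1 m) //= [RHS](bigD1 (s m)) //= off_m eqxx mul1r.
rewrite [X in _ + X]big1 ?addr0 // => j js.
by rewrite off_m (negPf js) mul0r mulr0.
Qed.

Lemma permanent_row_delta_dup X (m m' l : 'I_n) : m != m' ->
  (forall k, X m' k = (l == k)%:R) -> permanent (row_delta X m l) = 0.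
Proof.
move=> mm' Xm'; rewrite /permanent big1 // => s _.
rewrite (bigD1 m) // (bigD1 m') 1?eq_sym //= row_delta_row row_delta_neq 1?eq_sym //.
rewrite Xm' mulrA; case: (eqVneq l (s m)) => [->|lsm]; last by rewrite !mul0r.
by rewrite (inj_eq perm_inj) (negPf mm') mulr0 mul0r.
Qed.

(* Reindex the right-hand side by [s |-> s * tperm j k]. *)
Lemma permanent_row_delta_swap X (m j k : 'I_n) : m != j ->
  permanent (row_delta (row_delta X m j) j k) = permanent (row_delta (row_delta X j j) m k).
Proof.
move=> mj; have jm : j != m by rewrite eq_sym.
rewrite /permanent [RHS](reindex_inj (mulIg (tperm j k))) /=.
apply: eq_bigr => s _.
rewrite (bigD1 j) // (bigD1 m) 1?eq_sym //=.
rewrite [in RHS](bigD1 j) // [in RHS](bigD1 m) 1?eq_sym //=.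
rewrite !permM !row_delta_row row_delta_neq // row_delta_row row_delta_neq // row_delta_row.
have tpermE a b : (a == tperm j k b) = (tperm j k a == b).
  by rewrite -{1}(tpermK j k a) (inj_eq perm_inj).
rewrite !tpermE tpermL tpermR !mulrA.
case: (eqVneq k (s j)) => [ksj|]; last by rewrite !mul0r.
case: (eqVneq j (s m)) => [jsm|]; last by rewrite mulr0 !mul0r.
congr (_ * _); apply: eq_bigr => i /andP [ij im].
rewrite !row_delta_neq // permM tpermD //.
  by rewrite jsm (inj_eq perm_inj) eq_sym.
by rewrite ksj (inj_eq perm_inj) eq_sym.
Qed.

Lemma permanent1 : permanent (1%:M : 'M[R]_n) = 1.
Proof.
rewrite /permanent (bigD1 1%g) //= [X in _ + X]big1 => [|s s1].
  by rewrite addr0; apply: big1 => i _; rewrite perm1 mxE eqxx.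
have [i si] : exists i, s i != i.
  apply/existsP; rewrite -negb_forall; apply: contra s1 => /forallP s_id.
  by apply/eqP/permP => i; rewrite perm1; apply/eqP.
by rewrite (bigD1 i) //= mxE eq_sym (negPf si) mul0r.
Qed.

End PermanentRows.

Section PermanentOrder.
Variables (R : numDomainType) (n : nat).
Implicit Types X : 'M[R]_n.

Lemma permanent_ge0 X : (forall i j, 0 <= X i j) -> 0 <= permanent X.
Proof. by move=> X0; apply: sumr_ge0 => s _; apply: prodr_ge0. Qed.

Lemma ler_permanent (X Y : 'M[R]_n) : (forall i j, 0 <= X i j <= Y i j) ->
  permanent X <= permanent Y.
Proof. by move=> XY; apply: ler_sum => s _; apply: ler_prod => i _. Qed.

End PermanentOrder.

Section ContinuityOnTheLine.
Variable R : realType.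

Lemma continuous_ge0_at_left (h : R -> R) (a : R) : continuous h -> 0 < a ->
  (forall x, 0 <= x -> x < a -> 0 <= h x) -> 0 <= h a.
Proof.
move=> hc a0 h_ge0.
have := cvg_at_left_filter (hc a).
apply: (closed_cvg _ (@closed_ge R 0)).
near=> x; apply: h_ge0; near: x; [exact: nbhs_left_ge | exact: nbhs_left_lt].
Unshelve. all: by end_near.
Qed.

Local Open Scope classical_set_scope.

Lemma first_nonpos_point (g : R -> R) (b : R) :
  continuous g -> 0 < g 0 -> 0 <= b -> g b <= 0 ->
  exists s, [/\ 0 < s, s <= b, g s <= 0 & forall x, 0 <= x -> x < s -> 0 < g x].
Proof.
move=> gc g0 b0 gb.
pose T := [set x : R | 0 <= x /\ x <= b /\ g x <= 0].
have T_lb : has_lbound T by exists 0 => x [].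
have T_inf : T (inf T).
  have T0 : T !=set0 by exists b.
  split; first by apply: lb_le_inf => // x [].
  split; first exact: ge_inf.
  rewrite leNgt; apply/negP => ginf_gt0.
  have g_pos_near : \forall t \near inf T, 0 < g t.
    exact: cvgr_gt _ (gc (inf T)) _ ginf_gt0.
  have [e e0 ge] := (nbhs_normP _ _).1 g_pos_near.
  have [y Ty ylt] := inf_adherent e0 (conj T0 T_lb).
  have : 0 < g y.
    by apply: ge; rewrite /= distrC ger0_norm ?subr_ge0 ?ltrBlDl // ge_inf.
  by case: Ty => _ [_]; rewrite leNgt => /negP.
case: T_inf => inf0 [infb ginf]; exists (inf T); split => //.
- by rewrite lt_neqAle inf0 andbT; apply: contraTneq ginf => <-; rewrite -ltNge.
- move=> x x0 xlt; rewrite ltNge; apply/negP => gx.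
  have Tx : T x by split => //; split => //; rewrite (le_trans (ltW xlt)).
  by move: xlt; rewrite ltNge ge_inf.
Qed.

Lemma continuous_det_affine k (C0 C1 : 'M[R]_k) :
  continuous (fun x : R => \det (C0 + x *: C1)).
Proof.
pose p := \det (map_mx polyC C0 + 'X *: map_mx polyC C1).
suff -> : (fun x => \det (C0 + x *: C1)) = horner p by exact: continuous_horner.
apply: funext => x; rewrite /p -horner_evalE -det_map_mx; congr (\det _).
by apply/matrixP => i j; rewrite !mxE /= horner_evalE !hornerE mulrC.
Qed.

Lemma continuous_adj_affine k (C0 C1 : 'M[R]_k) (i j : 'I_k) :
  continuous (fun x : R => \adj (C0 + x *: C1) i j).
Proof.
have -> : (fun x => \adj (C0 + x *: C1) i j) =
    (fun x => (-1) ^+ (j + i) * \det (row' j (col' i C0) + x *: row' j (col' i C1))).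
  apply: funext => x; rewrite mxE /cofactor; congr (_ * \det _).
  by apply/matrixP => a b; rewrite !mxE.
by move=> x; apply: cvgM; [exact: cvg_cst | exact: continuous_det_affine].
Qed.

End ContinuityOnTheLine.

Section ZeroRows.
Variables (R : realType) (n : nat).
Implicit Types (B : 'M[R]_n) (D : {set 'I_n}).

Definition nnegmx B := forall i j, 0 <= B i j.

Definition det_pos01 B := forall g, 0 <= g <= 1 -> 0 < \det (1%:M - g *: B).

Definition zero_rows D B : 'M[R]_n := \matrix_(i, j) if i \in D then 0 else B i j.

Lemma zero_rowsZ D B g : zero_rows D (g *: B) = g *: zero_rows D B.
Proof. by apply/matrixP => i j; rewrite !mxE; case: ifP; rewrite ?mulr0. Qed.

Lemma zero_rows0 B : zero_rows finset.set0 B = B.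
Proof. by apply/matrixP => i j; rewrite !mxE inE. Qed.

Lemma zero_rowsT B : zero_rows [set: 'I_n] B = 0.
Proof. by apply/matrixP => i j; rewrite !mxE inE. Qed.

Lemma zero_rows_ge0 D B : nnegmx B -> nnegmx (zero_rows D B).
Proof. by move=> B0 i j; rewrite mxE; case: ifP. Qed.

Lemma zero_rowsU1_le D B (m i k : 'I_n) : nnegmx B ->
  zero_rows (m |: D) B i k <= zero_rows D B i k.
Proof.
by move=> B0; rewrite !mxE !inE; case: (i \in D); case: (i == m); rewrite /= ?lexx ?B0.
Qed.

Lemma sub_zero_rowsU1_neq D B (m i k : 'I_n) : i != m ->
  (1%:M - zero_rows (m |: D) B) i k = (1%:M - zero_rows D B) i k.
Proof. by move=> im; rewrite !mxE !inE (negPf im). Qed.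

Lemma sub_zero_rowsU1_row D B (m k : 'I_n) :
  (1%:M - zero_rows (m |: D) B) m k = (m == k)%:R.
Proof. by rewrite !mxE setU11 subr0. Qed.

Lemma sub_zero_rows_notin D B (m k : 'I_n) : m \notin D ->
  (1%:M - zero_rows D B) m k = (m == k)%:R - B m k.
Proof. by move=> mD; rewrite !mxE (negPf mD). Qed.

Lemma det_pos01_1 B : det_pos01 B -> 0 < \det (1%:M - B).
Proof. by move/(_ 1); rewrite ler01 lexx scale1r; apply. Qed.

Lemma unitmx_det_gt0 B : 0 < \det B -> B \in unitmx.
Proof. by move=> dB; rewrite unitmxE unitfE gt_eqF. Qed.

(* With [c := B_m * Y_{m+D}] we get [det (1 - B_D) = det (1 - B_{m+D}) (1 - c_m)],
   so [1 - c_m > 0], and the rank-one update [Y_D = Y_{m+D} + Y_D e_m c] has a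
   nonnegative increment. *)
Lemma invmx_zero_rowsU1_le_of_ge0 D B (m : 'I_n) : m \notin D -> nnegmx B ->
  0 < \det (1%:M - zero_rows D B) -> 0 < \det (1%:M - zero_rows (m |: D) B) ->
  nnegmx (invmx (1%:M - zero_rows (m |: D) B)) ->
  forall i j, invmx (1%:M - zero_rows (m |: D) B) i j <= invmx (1%:M - zero_rows D B) i j.
Proof.
move=> mD B0 dX dX' Y'0.
set X := 1%:M - zero_rows D B; set X' := 1%:M - zero_rows (m |: D) B.
set Y := invmx X; set Y' := invmx X'.
have eqXX' i k : i != m -> X i k = X' i k by move=> im; rewrite sub_zero_rowsU1_neq.
have rowm k : X' m k - X m k = B m k.
  by rewrite sub_zero_rowsU1_row sub_zero_rows_notin // opprB addrC subrK.
pose c j := \sum_l B m l * Y' l j.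
have c0 j : 0 <= c j by apply: sumr_ge0 => l _; rewrite mulr_ge0.
have YE i j : Y i j = Y' i j + Y i m * c j.
  rewrite (invmx_row_change eqXX') ?unitmx_det_gt0 //.
  by congr (_ + _ * _); apply: eq_bigr => l _; rewrite rowm.
have detX : \det X = \det X' * (1 - c m).
  rewrite (det_row_change eqXX') mulrBr mulr1 big_distrr /= -sumrN.
  congr (_ + _); apply: eq_bigr => k _.
  by rewrite -opprB rowm adj_invmx ?unitmx_det_gt0 // mxE -/Y' mulNr mulrCA.
have c1 : 0 < 1 - c m by move: dX; rewrite detX pmulr_rgt0.
have Yim i : 0 <= Y i m.
  have : Y i m * (1 - c m) = Y' i m by rewrite mulrBr mulr1 {1}YE addrK.
  by move=> e; rewrite -(pmulr_lge0 _ c1) e.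
by move=> i j; rewrite YE lerDl mulr_ge0.
Qed.

(* If [det (1 - x B_{m+D})] first vanished at [s], the cofactors along row [m]
   would be nonnegative there, as limits of [det * inverse]; expanding along row
   [m] would then make [det (1 - s B_D)] nonpositive. *)
Lemma det_pos01_zero_rowsU1_of_inv_ge0 D B (m : 'I_n) : m \notin D -> nnegmx B ->
  (forall x, 0 <= x -> det_pos01 (zero_rows (m |: D) (x *: B)) ->
     nnegmx (invmx (1%:M - zero_rows (m |: D) (x *: B)))) ->
  det_pos01 (zero_rows D B) -> det_pos01 (zero_rows (m |: D) B).
Proof.
move=> mD B0 inv_ge0 posD g /andP[g0 g1]; rewrite ltNge; apply/negP => Gg.
set C := zero_rows (m |: D) B; pose G x := \det (1%:M - x *: C).
have Gc : continuous G.
  have -> : G = fun x => \det (1%:M + x *: - C) by apply: funext => x; rewrite scalerN.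
  exact: continuous_det_affine.
have G0 : 0 < G 0 by rewrite /G scale0r subr0 det1 ltr01.
have [s [s0 sg Gs G_gt0]] := first_nonpos_point Gc G0 g0 Gg.
have posC x : 0 <= x -> x < s -> det_pos01 (zero_rows (m |: D) (x *: B)).
  move=> x0 xs t /andP[t0 t1]; rewrite zero_rowsZ scalerA.
  by apply: G_gt0; rewrite ?mulr_ge0 // (le_lt_trans _ xs) // ler_piMl.
have adj_ge0 k : 0 <= \adj (1%:M - s *: C) k m.
  have adjC x : \adj (1%:M - x *: C) k m = \adj (1%:M + x *: - C) k m by rewrite scalerN.
  rewrite adjC.
  apply: (@continuous_ge0_at_left R (fun x => \adj (1%:M + x *: - C) k m)) => // [|x x0 xs].
    exact: continuous_adj_affine.
  have := inv_ge0 _ x0 (posC x x0 xs) k m; rewrite zero_rowsZ -adjC.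
  by rewrite adj_invmx ?unitmx_det_gt0 ?G_gt0 // mxE; apply: mulr_ge0; rewrite ltW ?G_gt0.
have rowm k : (1%:M - zero_rows D (s *: B)) m k - (1%:M - zero_rows (m |: D) (s *: B)) m k
    = - (s * B m k).
  by rewrite sub_zero_rowsU1_row sub_zero_rows_notin // mxE addrC addKr.
have eqXY i k : i != m ->
    (1%:M - zero_rows D (s *: B)) i k = (1%:M - zero_rows (m |: D) (s *: B)) i k.
  by move=> im; rewrite sub_zero_rowsU1_neq.
have := posD s; rewrite ltW // (le_trans sg g1) -zero_rowsZ (det_row_change eqXY).
rewrite ltNge => /(_ isT)/negP; apply.
under eq_bigr => k _ do rewrite rowm zero_rowsZ.
rewrite zero_rowsZ -/C -/(G s) -[leRHS](addr0 0) lerD // sumr_le0 // => k _.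
by rewrite mulNr oppr_le0 mulr_ge0 ?mulr_ge0 // ltW.
Qed.

Lemma invmx_zero_rows_ge0 D B : nnegmx B -> det_pos01 (zero_rows D B) ->
  nnegmx (invmx (1%:M - zero_rows D B)).
Proof.
elim/setU1_ind: D B => D IH B B0 posD.
case: (set_0Vmem (~: D)) => [DT | [m]].
  rewrite -[D]finset.setCK DT finset.setC0 zero_rowsT subr0 invmx1 => i j.
  by rewrite mxE ler0n.
rewrite inE => mD.
have xB0 x : 0 <= x -> nnegmx (x *: B) by move=> x0 i j; rewrite mxE mulr_ge0.
have posD' := det_pos01_zero_rowsU1_of_inv_ge0 mD B0 (fun x x0 => IH m mD _ (xB0 x x0)) posD.
move=> i j; apply: le_trans (IH m mD B B0 posD' i j) _.
by apply: invmx_zero_rowsU1_le_of_ge0 => //; [apply: det_pos01_1.. | apply: IH].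
Qed.

Lemma det_pos01_zero_rowsU1 D B (m : 'I_n) : nnegmx B ->
  det_pos01 (zero_rows D B) -> det_pos01 (zero_rows (m |: D) B).
Proof.
move=> B0 posD; have [mD|mD] := boolP (m \in D).
  by rewrite (finset.setUidPr _) ?finset.sub1set.
apply: det_pos01_zero_rowsU1_of_inv_ge0 => // x x0; apply: invmx_zero_rows_ge0.
by move=> i j; rewrite mxE mulr_ge0.
Qed.

Lemma invmx_zero_rowsU1_le D B (m : 'I_n) : nnegmx B -> det_pos01 (zero_rows D B) ->
  forall i j, invmx (1%:M - zero_rows (m |: D) B) i j <= invmx (1%:M - zero_rows D B) i j.
Proof.
move=> B0 posD; have [mD|mD] := boolP (m \in D).
  by rewrite (finset.setUidPr _) ?finset.sub1set.
have posD' := det_pos01_zero_rowsU1 m B0 posD.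
apply: invmx_zero_rowsU1_le_of_ge0 => //; [exact: det_pos01_1 | exact: det_pos01_1 |].
exact: invmx_zero_rows_ge0.
Qed.

End ZeroRows.

Section PermanentBound.
Variables (R : realType) (n : nat) (A : 'M[R]_n).
Hypothesis A0 : nnegmx A.
Implicit Types D : {set 'I_n}.

Let M D := 1%:M + zero_rows D A.
Let Y D := invmx (1%:M - zero_rows D A).
Let P D := permanent (M D).

Lemma resolvent_entry D : det_pos01 (zero_rows D A) -> forall i j,
  Y D i j = (i == j)%:R + \sum_k zero_rows D A i k * Y D k j.
Proof.
move=> posD i j; have uX := unitmx_det_gt0 (det_pos01_1 posD).
have : (1%:M - zero_rows D A) *m Y D = 1%:M by exact: mulmxV.
rewrite mulmxBl mul1mx => /eqP; rewrite subr_eq => /eqP YE.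
by rewrite {1}YE !mxE.
Qed.

Lemma resolvent_diag_ge1 D (m : 'I_n) : det_pos01 (zero_rows D A) -> 1 <= Y D m m.
Proof.
move=> posD; rewrite resolvent_entry // eqxx lerDl; apply: sumr_ge0 => k _.
by rewrite mulr_ge0 ?zero_rows_ge0 ?invmx_zero_rows_ge0.
Qed.

Lemma resolvent_diag_det D (m : 'I_n) : det_pos01 (zero_rows D A) -> m \notin D ->
  Y D m m * \det (1%:M - zero_rows D A) = \det (1%:M - zero_rows (m |: D) A).
Proof.
move=> posD mD; have uX := unitmx_det_gt0 (det_pos01_1 posD).
have eqXX' i k : i != m ->
    (1%:M - zero_rows D A) i k = (1%:M - zero_rows (m |: D) A) i k.
  by move=> im; rewrite sub_zero_rowsU1_neq.
have adjE : \adj (1%:M - zero_rows D A) m m = \det (1%:M - zero_rows D A) * Y D m m.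
  by rewrite adj_invmx // mxE.
rewrite mulrC -adjE mxE.
by rewrite (cofactor_row_change eqXX') -det_delta_row // => k; rewrite sub_zero_rowsU1_row.
Qed.

Lemma M_row_in D (j l : 'I_n) : j \in D -> M D j l = (j == l)%:R.
Proof. by move=> jD; rewrite !mxE jD addr0. Qed.

Lemma M_row_notin D (j l : 'I_n) : j \notin D -> M D j l = (j == l)%:R + A j l.
Proof. by move=> jD; rewrite !mxE (negPf jD). Qed.

Lemma row_delta_M_diag D (m : 'I_n) : row_delta (M D) m m = M (m |: D).
Proof. by apply/matrixP => i k; rewrite !mxE !inE; case: eqP => [->|]; rewrite ?addr0. Qed.

Lemma M_ge0 D : nnegmx (M D).
Proof. by move=> i k; rewrite mxE addr_ge0 ?zero_rows_ge0 // mxE ler0n. Qed.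

Lemma permanent_zero_rowsU1_le D (j : 'I_n) : P (j |: D) <= P D.
Proof.
apply: ler_permanent => i k; rewrite M_ge0 /= !mxE lerD2l.
by have := @zero_rowsU1_le R n D A j i k A0; rewrite !mxE.
Qed.

Lemma permanent_row_delta_le D : det_pos01 (zero_rows D A) -> forall m j : 'I_n,
  m \notin D -> permanent (row_delta (M D) m j) <= Y D j m * P (m |: D).
Proof.
elim/setU1_ind: D => D IH posD m j mD.
have Y0 := invmx_zero_rows_ge0 A0 posD.
have P0 := permanent_ge0 (M_ge0 (m |: D)).
have [->|jm] := eqVneq j m.
  by rewrite row_delta_M_diag ler_peMl // resolvent_diag_ge1.
have [jD|jD] := boolP (j \in D).
  rewrite (permanent_row_delta_dup (m' := j)) ?mulr_ge0 // => [|k]; first by rewrite eq_sym.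
  exact: M_row_in.
have posD' := det_pos01_zero_rowsU1 j A0 posD.
have mD' : m \notin j |: D by rewrite !inE negb_or eq_sym jm.
have T_le l : permanent (row_delta (row_delta (M D) m j) j l) <= Y D l m * P (m |: D).
  rewrite permanent_row_delta_swap 1?eq_sym // row_delta_M_diag.
  apply: le_trans (IH j jD posD' m l mD') _; apply: ler_pM.
  - exact: invmx_zero_rows_ge0.
  - exact: permanent_ge0 (M_ge0 _).
  - exact: invmx_zero_rowsU1_le.
  - by rewrite finset.setUCA; apply: permanent_zero_rowsU1_le.
have T_j : permanent (row_delta (row_delta (M D) m j) j j) = 0.
  by apply: (permanent_row_delta_dup (m' := m)) => // k; rewrite row_delta_row.
rewrite (expand_permanent_row _ j).
apply: le_trans (_ : \sum_l A j l * (Y D l m * P (m |: D)) <= _).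
  apply: ler_sum => l _; rewrite row_delta_neq // M_row_notin // mulrDl.
  have [<-|jl] := eqVneq j l; last by rewrite mul0r add0r ler_wpM2l.
  by rewrite T_j !mulr0 add0r !mulr_ge0.
rewrite (resolvent_entry posD j m) (negPf jm) add0r big_distrl /=.
by apply: ler_sum => l _; rewrite mxE (negPf jD) mulrA.
Qed.

Lemma permanent_mul_det_le1 D : det_pos01 (zero_rows D A) ->
  P D * \det (1%:M - zero_rows D A) <= 1.
Proof.
elim/setU1_ind: D => D IH posD.
case: (set_0Vmem (~: D)) => [DT | [m]].
  rewrite /P /M -[D]finset.setCK DT finset.setC0 zero_rowsT addr0 subr0.
  by rewrite permanent1 det1 mulr1.
rewrite inE => mD.
have P_le : P D <= Y D m m * P (m |: D).
  have sum_delta : \sum_l (m == l)%:R * P (m |: D) = P (m |: D).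
    rewrite (bigD1 m) //= eqxx mul1r big1 ?addr0 // => l lm.
    by rewrite eq_sym (negPf lm) mul0r.
  rewrite /P (expand_permanent_row _ m).
  apply: le_trans
    (_ : \sum_l ((m == l)%:R * P (m |: D) + A m l * (Y D l m * P (m |: D))) <= _).
    apply: ler_sum => l _; rewrite M_row_notin // mulrDl lerD //.
      by have [<-|ml] := eqVneq m l; rewrite ?mul0r // row_delta_M_diag mul1r.
    by rewrite ler_wpM2l // permanent_row_delta_le.
  rewrite big_split /= sum_delta (resolvent_entry posD m m) eqxx mulrDl mul1r big_distrl /=.
  by rewrite lerD2l; apply: ler_sum => l _; rewrite mxE (negPf mD) mulrA.
have det_ge0 : 0 <= \det (1%:M - zero_rows D A) by apply/ltW/det_pos01_1.
apply: le_trans (ler_wpM2r det_ge0 P_le) _.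
rewrite mulrAC resolvent_diag_det // mulrC.
exact: IH m mD (det_pos01_zero_rowsU1 m A0 posD).
Qed.

End PermanentBound.

Lemma permanent_le_invdet (R : realType) n (A : 'M[R]_n) : nnegmx A -> det_pos01 A ->
  permanent (1%:M + A) <= (\det (1%:M - A))^-1.
Proof.
move=> A0 posA; have := permanent_mul_det_le1 A0 (D := finset.set0).
rewrite !zero_rows0 => /(_ posA).
by rewrite -[_^-1]div1r ler_pdivlMr // det_pos01_1.
Qed.

Lemma bounded_of_eventually_bounded (R : realDomainType) (u : nat -> R) (N : nat) (b : R) :
  (forall n, (N <= n)%N -> u n <= b) -> exists c, forall n, u n <= c.
Proof.
move=> ub; exists (`|b| + \sum_(i < N) `|u i|) => n.
have [ltnN|leNn] := ltnP n N.
  apply: le_trans (ler_norm _) (ler_wpDl (normr_ge0 b) _).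
  by rewrite (bigD1 (Ordinal ltnN)) //= lerDl sumr_ge0.
by apply: le_trans (ub n leNn) (le_trans (ler_norm b) _); rewrite lerDl sumr_ge0.
Qed.

Theorem lemma3p4 (R : realType) (S : forall n : nat, 'M[R]_n) :
  (forall (n : nat) (i j : 'I_n), 0 <= S n i j) ->
  assumption2 S ->
  forall eps : R, 0 < eps -> eps <= 1 ->
    exists M : R, forall n : nat,
      permanent (1%:M + (1 - eps) *: S n) <= M.
Proof.
move=> S0 A2 eps eps0 eps1.
have [c c0 [N detS]] := A2 eps eps0 eps1.
have eps_le1 : 0 <= 1 - eps by rewrite subr_ge0.
apply: (@bounded_of_eventually_bounded _ _ N c^-1) => n leNn.
have B0 : nnegmx ((1 - eps) *: S n) by move=> i j; rewrite mxE mulr_ge0.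
have posB : det_pos01 ((1 - eps) *: S n).
  move=> g /andP[g0 g1]; rewrite scalerA.
  by apply: lt_le_trans c0 (detS n leNn _ _ _); rewrite ?mulr_ge0 // ler_piMl.
have detB : c <= \det (1%:M - (1 - eps) *: S n) by apply: detS; rewrite ?lexx.
apply: le_trans (permanent_le_invdet B0 posB) _.
by rewrite lef_pV2 ?posrE ?(lt_le_trans c0 detB).
Qed.
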